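(* Let $\mathcal{L}$ be a finite algebraic language and $\mathcal{V}$ an equational class of $\mathcal{L}$-algebras. Let $\Sigma\cup\Delta$ be a finite set of $\mathcal{L}$-identities and $X\supseteq\mathrm{Var}(\Sigma\cup\Delta)$ a finite set of variables. If $S$ is a complete set for $\mathsf{E}_{\mathcal{V}}(\Sigma,X)$, then the following are equivalent: (i) the clause $\Sigma\Rightarrow\Delta$ is $\mathcal{V}$-admissible; (ii) each $\sigma\in S$ is a $\mathcal{V}$-unifier of some identity $\varphi\approx\psi\in\Delta$; (iii) for each $\sigma\in S$, $\Delta\cap\ker(h_{\mathcal{V}}\circ\sigma)\neq\emptyset$.
   Context: $\mathbf{Fm}_{\mathcal{L}}(Y)$ is the formula algebra of $\mathcal{L}$ over variables $Y$ ($\omega$ = the set of all variables); substitutions are homomorphisms of formula algebras; $\mathrm{Var}(\Gamma)$ is the set of variables occurring in $\Gamma$. $h_{\mathcal{V}}\colon\mathbf{Fm}_{\mathcal{L}}(Y)\to\mathbf{F}_{\mathcal{V}}(Y)$ is the canonical homomorphism onto the free algebra of $\mathcal{V}$, so $h_{\mathcal{V}}(\varphi)=h_{\mathcal{V}}(\psi)$ iff $\mathcal{V}\models\varphi\approx\psi$; identities are identified with pairs of formulas, and $\ker(h)=\{(a,b)\mid h(a)=h(b)\}$. A substitution $\sigma\colon\mathbf{Fm}_{\mathcal{L}}(X)\to\mathbf{Fm}_{\mathcal{L}}(\omega)$ is a $\mathcal{V}$-unifier (over $X$) of a set $\Gamma$ of identities with $\mathrm{Var}(\Gamma)\subseteq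 X$ if $\mathcal{V}\models\sigma(\varphi)\approx\sigma(\psi)$ for all $\varphi\approx\psi\in\Gamma$. A clause $\Sigma\Rightarrow\Delta$ (pair of finite sets of identities) is $\mathcal{V}$-admissible if every substitution $\sigma\colon\mathbf{Fm}_{\mathcal{L}}(\mathrm{Var}(\Sigma\cup\Delta))\to\mathbf{Fm}_{\mathcal{L}}(\omega)$ that is a $\mathcal{V}$-unifier of $\Sigma$ is a $\mathcal{V}$-unifier of some member of $\Delta$. For substitutions $\sigma_1,\sigma_2$ over $X$, $\sigma_2\sqsubseteq_{\mathcal{V}}\sigma_1$ iff $\ker(h_{\mathcal{V}}\circ\sigma_1)\subseteq\ker(h_{\mathcal{V}}\circ\sigma_2)$. $\mathsf{E}_{\mathcal{V}}(\Sigma,X)$ is the set of $\mathcal{V}$-unifiers of $\Sigma$ over $X$ preordered by $\sqsubseteq_{\mathcal{V}}$. A complete set for a preordered set $(P,\le)$ is $M\subseteq P$ such that for every $x\in P$ there is $y\in M$ with $x\le y$. *)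

From mathcomp Require Import all_boot.
From Stdlib Require List.
Set Implicit Arguments. Unset Strict Implicit. Unset Printing Implicit Defensive.

Record language := Language { op : finType; ar : op -> nat }.

Inductive term (L : language) : Type :=
| Var : nat -> term L
| App : forall o : op L, ('I_(ar o) -> term L) -> term L.
Arguments Var {L} _.

Definition identity (L : language) := (term L * term L)%type.

Inductive occurs (L : language) (x : nat) : term L -> Prop :=
| occ_var : occurs x (Var x)
| occ_app : forall o (f : 'I_(ar o) -> term L) i, occurs x (f i) -> occurs x (App f).

Definition term_over (L : language) (X : seq nat) (t : term L) : Prop :=
  forall x, occurs x t -> x \in X.

Definition vars_in (L : language) (Gamma : seq (identity L)) (X : seq nat) : Prop :=
  forall p, List.In p Gamma -> term_over X p.1 /\ term_over X p.2.

Fixpoint subst (L : language) (s : nat -> term L) (t : term L) : term L :=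
  match t with
  | Var x => s x
  | App o f => App (fun i => subst s (f i))
  end.

Record algebra (L : language) := Algebra {
  carrier :> Type;
  interp : forall o : op L, ('I_(ar o) -> carrier) -> carrier }.

Fixpoint eval (L : language) (A : algebra L) (v : nat -> A) (t : term L) : A :=
  match t with
  | Var x => v x
  | App o f => @interp L A o (fun i => eval v (f i))
  end.

Definition satisfies (L : language) (A : algebra L) (p : identity L) : Prop :=
  forall v : nat -> A, eval v p.1 = eval v p.2.

(* The equational class V = Mod(E) axiomatized by a set E of identities;
   V |= phi ~ psi. *)
Definition Vmodels (L : language) (E : identity L -> Prop) (p : identity L) : Prop :=
  forall A : algebra L, (forall e, E e -> satisfies A e) -> satisfies A p.

Definition unifies (L : language) (E : identity L -> Prop) (s : nat -> term L)
  (p : identity L) : Prop :=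
  Vmodels E (subst s p.1, subst s p.2).

Definition unifier (L : language) (E : identity L -> Prop) (Gamma : seq (identity L))
  (s : nat -> term L) : Prop :=
  forall p, List.In p Gamma -> unifies E s p.

(* ker(h_V o sigma) for sigma : Fm_L(X) -> Fm_L(omega):
   pairs (a,b) of formulas over X with h_V(sigma a) = h_V(sigma b),
   i.e. V |= sigma a ~ sigma b. *)
Definition kerV (L : language) (E : identity L -> Prop) (X : seq nat)
  (s : nat -> term L) (p : identity L) : Prop :=
  term_over X p.1 /\ term_over X p.2 /\ Vmodels E (subst s p.1, subst s p.2).

Definition less_general (L : language) (E : identity L -> Prop) (X : seq nat)
  (s2 s1 : nat -> term L) : Prop :=
  forall p, kerV E X s1 p -> kerV E X s2 p.

Definition complete_set (L : language) (E : identity L -> Prop)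
  (Sigma : seq (identity L)) (X : seq nat) (S : (nat -> term L) -> Prop) : Prop :=
  (forall s, S s -> unifier E Sigma s) /\
  (forall s, unifier E Sigma s -> exists2 t, S t & less_general E X s t).

Definition admissible (L : language) (E : identity L -> Prop)
  (Sigma Delta : seq (identity L)) : Prop :=
  forall s : nat -> term L, unifier E Sigma s -> exists2 p, List.In p Delta & unifies E s p.

(* A unifier of Sigma lies below some member of S, and lying below preserves
   every identity of the kernel; an identity of Delta is in the kernel as soon
   as it is unified, because its variables lie in X. *)
From mathcomp Require Import all_boot.
From Stdlib Require List.

Section Unifiers.

Context {L : language} {E : identity L -> Prop} {X : seq nat}.

Lemma vars_in_catr {Gamma Delta : seq (identity L)} :
  vars_in (Gamma ++ Delta) X -> vars_in Delta X.
Proof. by move=> HX p Hp; apply: HX; apply: List.in_or_app; right. Qed.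

Lemma kerVP (s : nat -> term L) (p : identity L) :
  term_over X p.1 -> term_over X p.2 -> kerV E X s p <-> unifies E s p.
Proof. by move=> H1 H2; split=> [[_ []] | Hu]. Qed.

Lemma less_general_unifies (s t : nat -> term L) (p : identity L) :
  term_over X p.1 -> term_over X p.2 ->
  less_general E X s t -> unifies E t p -> unifies E s p.
Proof.
by move=> H1 H2 Hst /(kerVP t p H1 H2) /Hst /(kerVP s p H1 H2).
Qed.

Lemma admissible_complete_set {Sigma Delta : seq (identity L)}
    {S : (nat -> term L) -> Prop} :
  vars_in Delta X -> complete_set E Sigma X S ->
  admissible E Sigma Delta <->
  (forall s, S s -> exists2 p, List.In p Delta & unifies E s p).
Proof.
move=> HD [HSu HSc]; split=> [Hadm s /HSu | HS s /HSc [t /HS [p Hp Htp] Hst]].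
  exact: Hadm.
have [H1 H2] := HD p Hp.
by exists p => //; apply: less_general_unifies H1 H2 Hst Htp.
Qed.

Lemma unifies_kerV_in {Delta : seq (identity L)} (s : nat -> term L) :
  vars_in Delta X ->
  (exists2 p, List.In p Delta & unifies E s p) <->
  (exists p, List.In p Delta /\ kerV E X s p).
Proof.
move=> HD; split=> [[p Hp Hu] | [p [Hp Hk]]]; exists p;
  have [H1 H2] := HD p Hp; have := kerVP s p H1 H2; tauto.
Qed.

End Unifiers.

Theorem corollary3p2 (L : language) (E : identity L -> Prop)
  (Sigma Delta : seq (identity L)) (X : seq nat)
  (HX : vars_in (Sigma ++ Delta) X)
  (S : (nat -> term L) -> Prop) (HS : complete_set E Sigma X S) :
  (admissible E Sigma Delta <->
     (forall s, S s -> exists2 p, List.In p Delta & unifies E s p)) /\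
  ((forall s, S s -> exists2 p, List.In p Delta & unifies E s p) <->
     (forall s, S s -> exists p, List.In p Delta /\ kerV E X s p)).
Proof.
have HD := vars_in_catr HX.
split; first exact: admissible_complete_set HD HS.
by split=> H s /H /(unifies_kerV_in s HD).
Qed.
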